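(* Let $\mathcal{C}_n$ be the set of real symmetric positive-semidefinite $n\times n$ matrices $\mathbf{C}$ with spectral radius $\rho(\mathbf{C})\le1$, and let $\mathbf{y}_0,\mathbf{y}_1\in\mathbb{R}^n$. Then $$\{\mathbf{C}\mathbf{y}_0+(\mathbf{I}_n-\mathbf{C})\mathbf{y}_1:\mathbf{C}\in\mathcal{C}_n\}=\Big\{\mathbf{y}\in\mathbb{R}^n:\Big\|\mathbf{y}-\tfrac{\mathbf{y}_0+\mathbf{y}_1}{2}\Big\|_2\le\tfrac12\|\mathbf{y}_1-\mathbf{y}_0\|_2\Big\},$$ i.e. the closed Euclidean ball centered at $(\mathbf{y}_0+\mathbf{y}_1)/2$ with radius $\frac12\|\mathbf{y}_1-\mathbf{y}_0\|_2$.
   Context: $\|\cdot\|_2$ is the Euclidean norm; $\mathbf{I}_n$ is the $n\times n$ identity matrix; $\rho(\mathbf{C})$ is the spectral radius (largest absolute value of an eigenvalue). *)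

From HB Require Import structures.
From mathcomp Require Import all_boot all_order all_algebra.
From mathcomp Require Import complex.
Set Implicit Arguments. Unset Strict Implicit. Unset Printing Implicit Defensive.
Import Order.TTheory GRing.Theory Num.Theory.
Local Open Scope ring_scope.

Definition norm2 (R : rcfType) (n : nat) (v : 'cV[R]_n) : R :=
  Num.sqrt (\sum_(i < n) v i 0 ^+ 2).

Definition symmetric_mx (R : rcfType) (n : nat) (C : 'M[R]_n) : Prop := C^T = C.

Definition psd_mx (R : rcfType) (n : nat) (C : 'M[R]_n) : Prop :=
  forall x : 'cV[R]_n, 0 <= (x^T *m C *m x) 0 0.

Definition spectral_radius_le1 (R : rcfType) (n : nat) (C : 'M[R]_n) : Prop :=
  forall z : R[i], eigenvalue (map_mx (fun x : R => x%:C%C) C) z -> `|z| <= 1.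

Definition class_Cn (R : rcfType) (n : nat) (C : 'M[R]_n) : Prop :=
  [/\ symmetric_mx C, psd_mx C & spectral_radius_le1 C].

(* Put c = y1 - y and d = y1 - y0: then y = C y0 + (I - C) y1 iff c = C d, and
   y lies in the ball iff |c|^2 <= c.d.  For C in C_n the spectral theorem,
   applied to the complexification of C, puts the eigenvalues of C in [0, 1], so
   C - C^2 is positive semidefinite and
   |C d|^2 = d^T C^2 d <= d^T C d = (C d).d.
   Conversely, if |c|^2 <= c.d, the rank-one matrix c c^T / c.d lies in C_n, its
   only nonzero eigenvalue being |c|^2 / c.d, and it maps d to c. *)

From HB Require Import structures.
From mathcomp Require Import all_boot all_order all_algebra.
From mathcomp Require Import complex spectral sesquilinear ring.
Import Order.TTheory GRing.Theory Num.Theory.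
Local Open Scope ring_scope.
Local Open Scope sesquilinear_scope.

Section NormalMatrix.
Context {C : numClosedFieldType} {n : nat}.
Implicit Types (A : 'M[C]_n) (u : 'rV[C]_n).

Lemma eigenvalue_spectral_diag A j :
  A \is normalmx -> eigenvalue A (spectral_diag A 0 j).
Proof.
move=> An; apply/eigenvalueP; exists (row j (spectralmx A)).
  rewrite -row_mul {2}(orthomx_spectralP An) !mulmxA mulmxV ?spectral_unit //.
  by rewrite mul1mx row_mul row_diag_mx -scalemxAl -rowE.
apply/eqP => row0; have := (row_unitarymxP (spectral_unitarymx A)) j j.
by rewrite row0 dotmxE mul0mx mxE eqxx => /eqP; rewrite eq_sym oner_eq0.
Qed.

Lemma diag_quadform_ge0 (d : 'rV[C]_n) u :
  (forall j, 0 <= d 0 j) -> 0 <= (u *m diag_mx d *m u^t*) 0 0.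
Proof.
move=> d_ge0; rewrite mul_mx_diag mxE; apply: sumr_ge0 => j _.
by rewrite !mxE mulrAC mulr_ge0 // -normCK exprn_ge0.
Qed.

Lemma normalmx_sub_sqr_quadform_ge0 A u : A \is normalmx ->
  (forall j, 0 <= spectral_diag A 0 j <= 1) ->
  0 <= (u *m (A - A *m A) *m u^t*) 0 0.
Proof.
move=> /orthomx_spectralP; set P := spectralmx A; set D := spectral_diag A.
move=> AE D01.
have P_unitary : P \is unitarymx by apply: spectral_unitarymx.
rewrite invmx_unitary // in AE.
have -> : A - A *m A = P^t* *m diag_mx (\row_j (D 0 j - D 0 j ^+ 2)) *m P.
  rewrite AE -!mulmxA [P *m (P^t* *m _)]mulmxA (unitarymxP P_unitary) mul1mx.
  rewrite [diag_mx D *m (_ *m _)]mulmxA mulmx_diag -mulmxBr -mulmxBl.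
  congr (_ *m (_ *m _)).
  apply/matrixP => i k; rewrite !mxE.
  by case: eqP; rewrite ?mulr1n ?mulr0n ?subr0.
rewrite !mulmxA -(mulmxA _ P) -[P *m u^t*]trmxCK trmx_mul map_mxM trmxCK.
apply: diag_quadform_ge0 => j; rewrite mxE subr_ge0 expr2.
by have /andP[D0 D1] := D01 j; rewrite ler_piMr.
Qed.
End NormalMatrix.

Lemma eigenvalue_rank1 (F : fieldType) n (c : 'cV[F]_n) (r : 'rV[F]_n) z :
  eigenvalue (c *m r) z -> z = 0 \/ z = (r *m c) 0 0.
Proof.
case/eigenvalueP => v v_eig v_neq0.
have zv : z *: v = (v *m c) 0 0 *: r.
  by rewrite -v_eig mulmxA {1}[v *m c]mx11_scalar mul_scalar_mx.
have [vc0|vc_neq0] := eqVneq ((v *m c) 0 0) 0.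
  left; apply/eqP; move: zv; rewrite vc0 scale0r => /eqP.
  by rewrite scaler_eq0 (negPf v_neq0) orbF.
right; apply: (mulIf vc_neq0).
have /(congr1 (fun M => (M *m c) 0 0)) := zv.
rewrite -!scalemxAl [(z *: (v *m c)) 0 0]mxE [(_ *: (r *m c)) 0 0]mxE => ->.
exact: mulrC.
Qed.

Lemma tr_mulmx_self_ge0 (R : realDomainType) n (c : 'cV[R]_n) :
  0 <= (c^T *m c) 0 0.
Proof. by rewrite mxE; apply: sumr_ge0 => j _; rewrite mxE -expr2 sqr_ge0. Qed.

Lemma tr_mulmx_self_eq0 (R : realDomainType) n (c : 'cV[R]_n) :
  ((c^T *m c) 0 0 == 0) = (c == 0).
Proof.
apply/eqP/eqP => [|->]; last by rewrite mulmx0 mxE.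
rewrite mxE => /eqP; rewrite psumr_eq0 => [/allP c0|j _]; last first.
  by rewrite mxE -expr2 sqr_ge0.
apply/matrixP => i j; rewrite ord1 mxE.
by have := c0 i (mem_index_enum i); rewrite mxE -expr2 sqrf_eq0 => /eqP.
Qed.

Section RealSymmetric.
Context {R : rcfType} {n : nat}.
Local Notation cmx M := (map_mx (real_complex R) M).
Implicit Types (C : 'M[R]_n) (c d : 'cV[R]_n).

Lemma psd_eigenvalue_ge0 C a : psd_mx C -> eigenvalue C a -> 0 <= a.
Proof.
move=> C_psd /eigenvalueP[v vC v_neq0].
have := C_psd v^T; rewrite trmxK vC -scalemxAl mxE.
have : 0 < (v^T^T *m v^T) 0 0.
  by rewrite lt_def tr_mulmx_self_eq0 trmx_eq0 v_neq0 tr_mulmx_self_ge0.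
by rewrite trmxK => /pmulr_lge0 ->.
Qed.

Lemma adj_cmx m p (M : 'M[R]_(m, p)) : (cmx M)^t* = cmx M^T.
Proof. by apply/matrixP => i j; rewrite !mxE; apply: conjc_real. Qed.

Lemma cmx_hermsym C : symmetric_mx C -> cmx C \is hermsymmx.
Proof.
by move=> C_sym; apply/is_hermitianmxP; rewrite expr0 scale1r adj_cmx C_sym.
Qed.

Lemma class_Cn_spectral_diag C j :
  class_Cn C -> 0 <= spectral_diag (cmx C) 0 j <= 1.
Proof.
case=> C_sym C_psd C_rho; have A_herm := cmx_hermsym C C_sym.
have z_eig := eigenvalue_spectral_diag _ j (hermitian_normalmx A_herm).
have /mxOverP/(_ 0 j) := hermitian_spectral_diag_real A_herm.
set z := spectral_diag _ 0 j in z_eig *.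
move=> /Creal_ReP; rewrite -complexRe => zE.
have Re_z_ge0 : 0 <= complex.Re z.
  by apply: (psd_eigenvalue_ge0 C _ C_psd); rewrite -zE eigenvalue_map in z_eig.
have z_ge0 : 0 <= z by rewrite -zE ler0c.
by rewrite z_ge0 -(ger0_norm z_ge0); apply: C_rho.
Qed.

Lemma class_Cn_sub_sqr_psd C : class_Cn C -> psd_mx (C - C *m C).
Proof.
move=> C_Cn x; case: (C_Cn) => C_sym _ _.
rewrite -ler0c; have -> : ((x^T *m (C - C *m C) *m x) 0 0)%:C%C =
  (cmx x^T *m (cmx C - cmx C *m cmx C) *m (cmx x^T)^t*) 0 0.
  by rewrite adj_cmx trmxK -!map_mxM -map_mxB -!map_mxM [RHS]mxE.
apply: normalmx_sub_sqr_quadform_ge0 => [|j].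
  exact/hermitian_normalmx/cmx_hermsym.
exact: class_Cn_spectral_diag.
Qed.

Lemma class_Cn_mulmx_le C d : class_Cn C ->
  ((C *m d)^T *m (C *m d)) 0 0 <= ((C *m d)^T *m d) 0 0.
Proof.
move=> C_Cn; case: (C_Cn) => C_sym _ _.
rewrite trmx_mul C_sym -subr_ge0 !mulmxA.
have := class_Cn_sub_sqr_psd C C_Cn d.
rewrite mulmxBr mulmxBl !mulmxA.
by rewrite [((_ : 'M[R]_1) - _) 0 0]mxE [(- (_ : 'M[R]_1)) 0 0]mxE.
Qed.

Lemma class_Cn_rank1 c d : (c^T *m c) 0 0 <= (c^T *m d) 0 0 ->
  exists2 C, class_Cn C & C *m d = c.
Proof.
set s := (c^T *m d) 0 0 => cc_le_s.
have s_ge0 : 0 <= s := le_trans (tr_mulmx_self_ge0 _ _ c) cc_le_s.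
exists (s^-1 *: (c *m c^T)); first split.
- by rewrite /symmetric_mx linearZ /= trmx_mul trmxK.
- move=> x; rewrite -scalemxAr -scalemxAl mxE mulr_ge0 ?invr_ge0 //.
  have -> : x^T *m (c *m c^T) *m x = (c^T *m x)^T *m (c^T *m x).
    by rewrite trmx_mul trmxK !mulmxA.
  exact: tr_mulmx_self_ge0.
- rewrite scalemxAl => z; rewrite map_mxM => /eigenvalue_rank1[->|->].
    by rewrite normr0 ler01.
  rewrite -map_mxM mxE -scalemxAr [(s^-1 *: _ : 'M[R]_1) 0 0]mxE.
  rewrite ger0_norm ?ler0c ?mulr_ge0 ?invr_ge0 ?tr_mulmx_self_ge0 // lecR.
  have [->|s_neq0] := eqVneq s 0; first by rewrite invr0 mul0r ler01.
  by rewrite mulrC ler_pdivrMr ?mul1r // lt_def s_neq0 s_ge0.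
- rewrite -scalemxAl -mulmxA {1}[c^T *m d]mx11_scalar mul_mx_scalar scalerA.
  have [s0|s_neq0] := eqVneq s 0; last by rewrite mulVf // scale1r.
  suff -> : c = 0 by rewrite scaler0.
  by apply/eqP; rewrite -tr_mulmx_self_eq0 eq_le tr_mulmx_self_ge0 -s0 cc_le_s.
Qed.

Lemma norm2_half_sub_le c d :
  (norm2 (2^-1 *: d - c) <= 2^-1 * norm2 d) =
  ((c^T *m c) 0 0 <= (c^T *m d) 0 0).
Proof.
have d_ge0 : 0 <= \sum_(i < n) d i 0 ^+ 2.
  by apply: sumr_ge0 => i _; apply: sqr_ge0.
rewrite /norm2 -[2^-1 * _]ger0_norm; last by rewrite mulr_ge0 ?invr_ge0 ?sqrtr_ge0.
rewrite -sqrtr_sqr exprMn sqr_sqrtr // ler_sqrt; last by rewrite mulr_ge0 ?sqr_ge0.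
rewrite -subr_ge0 -[RHS]subr_ge0; congr (0 <= _).
rewrite !mxE mulr_sumr -!sumrB; apply: eq_bigr => i _.
by rewrite !mxE; field.
Qed.
End RealSymmetric.

Lemma affine_combination_mulmx (T : pzRingType) n (C : 'M[T]_n)
    (y0 y1 : 'cV[T]_n) :
  C *m y0 + (1%:M - C) *m y1 = y1 - C *m (y1 - y0).
Proof. by rewrite mulmxBl mul1mx mulmxBr opprB addrCA. Qed.

Theorem lemma5 (R : rcfType) (n : nat) (y0 y1 : 'cV[R]_n) :
  forall y : 'cV[R]_n,
    (exists C : 'M[R]_n, class_Cn C /\ y = C *m y0 + (1%:M - C) *m y1) <->
    norm2 (y - 2^-1 *: (y0 + y1)) <= 2^-1 * norm2 (y1 - y0).
Proof.
move=> y; have -> : y - 2^-1 *: (y0 + y1) = 2^-1 *: (y1 - y0) - (y1 - y).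
  by apply/matrixP => i j; rewrite !mxE; field.
rewrite norm2_half_sub_le; split.
  case=> C [C_Cn ->]; rewrite affine_combination_mulmx subKr.
  exact: class_Cn_mulmx_le.
case/class_Cn_rank1 => C C_Cn Cd; exists C; split => //.
by rewrite affine_combination_mulmx Cd subKr.
Qed.
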